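(* Let $\mathcal{A}$ be a unital semiprime algebra over a field $F$ with $\operatorname{char}(F)\neq 2$. Then $\operatorname{GJDer}(\mathcal{A})=\operatorname{Cent}(\mathcal{A})+\operatorname{Der}(\mathcal{A})$.
   Context: $\mathcal{A}$ is semiprime if $a\mathcal{A}a=\{0\}$ implies $a=0$. For $x,y\in\mathcal{A}$ let $x\circ y=xy+yx$. $\operatorname{GJDer}(\mathcal{A})$ is the set of linear maps $f:\mathcal{A}\to\mathcal{A}$ for which there exist linear maps $g,h:\mathcal{A}\to\mathcal{A}$ with $f(x)\circ y+x\circ g(y)=h(x\circ y)$ for all $x,y\in\mathcal{A}$. $\operatorname{Cent}(\mathcal{A})$ is the set of linear maps $f$ with $f(xy)=f(x)y=xf(y)$ for all $x,y$ (centralizers). $\operatorname{Der}(\mathcal{A})$ is the set of derivations, i.e. linear $d$ with $d(xy)=d(x)y+xd(y)$. The sum of two sets of maps is the set of pointwise sums. *)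

From HB Require Import structures.
From mathcomp Require Import all_boot all_order all_algebra.
Set Implicit Arguments. Unset Strict Implicit. Unset Printing Implicit Defensive.
Import GRing.Theory.
Local Open Scope ring_scope.

Section Defs.
Variables (F : fieldType) (A : algType F).

Definition jprod (x y : A) : A := x * y + y * x.

Definition semiprime : Prop := forall a : A, (forall x : A, a * x * a = 0) -> a = 0.

Definition GJDer (f : A -> A) : Prop :=
  linear f /\
  exists g h : A -> A, linear g /\ linear h /\
    forall x y : A, jprod (f x) y + jprod x (g y) = h (jprod x y).

Definition Cent (f : A -> A) : Prop :=
  linear f /\ forall x y : A, f (x * y) = f x * y /\ f (x * y) = x * f y.

Definition Der (d : A -> A) : Prop :=
  linear d /\ forall x y : A, d (x * y) = d x * y + x * d y.

End Defs.

From HB Require Import structures.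
From mathcomp Require Import all_boot all_order all_algebra.
From Stdlib Require Import Ncring Ncring_tac FunctionalExtensionality.
Import GRing.Theory.
Local Open Scope ring_scope.

(* Put a := f 1 and c := g 1 - f 1.  Evaluating the defining identity at x = 1
   and at y = 1 expresses g and h through f, a and c, and its symmetry in x, y then
   makes c commute with every commutator, hence central in the semiprime algebra.
   What is left says 2 (f x o y + x o f y - f (x o y)) = (x o y) o a.  A suitable
   combination of instances of this identity eliminates f and yields
   [d^3 x, y] + 2 [d^2 x, d y] = 0 for the inner derivation d = [a, _], which at
   y = a gives d^4 = 0; by semiprimeness this forces successively d^3 = 0,
   d^2 = 0 and d = 0, so a is central.
   Then f - a _ is a Jordan derivation, and Herstein's argument, which extends to
   2-torsion-free semiprime algebras, shows that it is a derivation. *)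

Section GeneralizedJordanDerivations.
Context {F : fieldType} {A : algType F}.

#[local] Instance alg_ring_ops : @Ring_ops A 0 1 (@GRing.add A) (@GRing.mul A)
  (fun x y => x - y) (@GRing.opp A) (@eq A) := {}.

#[local] Program Instance alg_ring : @Ring A 0 1 (@GRing.add A) (@GRing.mul A)
  (fun x y => x - y) (@GRing.opp A) (@eq A) alg_ring_ops.
Next Obligation. exact: add0r. Qed.
Next Obligation. exact: addrC. Qed.
Next Obligation. exact: addrA. Qed.
Next Obligation. exact: mul1r. Qed.
Next Obligation. exact: mulr1. Qed.
Next Obligation. exact: mulrA. Qed.
Next Obligation. exact: mulrDl. Qed.
Next Obligation. exact: mulrDr. Qed.
Next Obligation. by []. Qed.
Next Obligation. exact: subrr. Qed.

Ltac ncr := non_commutative_ring.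

Definition ad (a x : A) : A := a * x - x * a.

Definition central (c : A) : Prop := forall t : A, c * t = t * c.

Lemma jprod1r (x : A) : jprod 1 x = x *+ 2.
Proof. by rewrite /jprod mul1r mulr1 mulr2n. Qed.

Lemma jprodr1 (x : A) : jprod x 1 = x *+ 2.
Proof. by rewrite /jprod mul1r mulr1 mulr2n. Qed.

Lemma ad_eq0 (a x : A) : (ad a x = 0) <-> a * x = x * a.
Proof. by rewrite /ad; split=> [/eqP|->]; [rewrite subr_eq0 => /eqP|rewrite subrr]. Qed.

Section Linear.
Context {f : A -> A} (f_lin : linear f).

Lemma linD : {morph f : u v / u + v}.
Proof. by move=> u v; have := f_lin 1 u v; rewrite !scale1r. Qed.

Lemma lin0 : f 0 = 0.
Proof. by apply: (addrI (f 0)); rewrite -linD !addr0. Qed.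

Lemma linN : {morph f : u / - u}.
Proof. by move=> u; apply: (addrI (f u)); rewrite -linD !subrr lin0. Qed.

Lemma linB : {morph f : u v / u - v}.
Proof. by move=> u v; rewrite linD linN. Qed.

Lemma linZ (c : F) : {morph f : u / c *: u}.
Proof. by move=> u; have := f_lin c u 0; rewrite !addr0 lin0 addr0. Qed.

End Linear.

Section Semiprime.
Hypothesis char2 : 2 \notin [pchar F].
Hypothesis A_semiprime : semiprime A.

Lemma double_eq0 (u : A) : u *+ 2 = 0 -> u = 0.
Proof.
have two_neq0 : (2%:R : F) != 0.
  by apply: contra char2 => two0; rewrite inE two0.
move=> u2; apply/eqP; have := scaler_eq0 (2%:R : F) u.
by rewrite scaler_nat u2 eqxx (negbTE two_neq0) /= => <-.
Qed.

Lemma double_inj (u v : A) : u *+ 2 = v *+ 2 -> u = v.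
Proof. by move=> e; apply/subr0_eq/double_eq0; rewrite mulrnBl e subrr. Qed.

Lemma semiprime_sandwich (p q : A) :
  (forall r, p * r * q + q * r * p = 0) -> forall r, p * r * q = 0.
Proof.
move=> pq0 r; apply: A_semiprime => y.
have pq z : p * z * q = - (q * z * p) by apply/eqP; rewrite -subr_eq0 opprK pq0.
have qp z : q * z * p = - (p * z * q) by rewrite pq opprK.
have prq := pq r.
set P := p * r * q * y * (p * r * q).
have P_sym : P = q * r * p * y * (q * r * p) by rewrite /P prq; ncr.
have P_anti : P = - (q * r * p * y * (q * r * p)).
  transitivity (p * (r * q * y * p * r) * q); first by rewrite /P; ncr.
  rewrite pq; transitivity (- (q * (r * q * y) * p * r * p)); first by ncr.
  rewrite qp; transitivity (p * r * q * (y * q * r * p)); first by ncr.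
  by rewrite prq; ncr.
by apply: double_eq0; rewrite mulr2n {1}P_sym P_anti addrN.
Qed.

Lemma semiprime_cross {G H : A -> A} :
  {morph G : x y / x + y} -> {morph H : x y / x + y} ->
  (forall x r, G x * r * H x = 0) -> (forall x r, H x * r * G x = 0) ->
  forall x u r, G x * r * H u = 0.
Proof.
move=> GD HD GH HG x u r; apply: A_semiprime => s.
have cross0 : G x * r * H u + G u * r * H x = 0.
  have := GH (x + u) r; rewrite GD HD !(mulrDl, mulrDr) !GH add0r addr0.
  by rewrite addrC.
have -> : G x * r * H u * s * (G x * r * H u) =
  G x * r * H u * s * (G x * r * H u + G u * r * H x)
  - G x * r * (H u * s * G u) * r * H x by ncr.
by rewrite cross0 HG; ncr.
Qed.

Lemma central_nilpotent_eq0 (c : A) n : central c -> c ^+ n.+1 = 0 -> c = 0.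
Proof.
move=> cc; elim: n => [|n IHn cn0]; first by rewrite expr1.
apply: IHn; apply: A_semiprime => r.
rewrite -mulrA (commrX n.+1 (commr_sym (cc r))) mulrA -exprD.
by rewrite addSn -addnS exprD cn0 mulr0 mul0r.
Qed.

Lemma central_of_commute_commutators (c : A) :
  (forall x y, c * ad x y = ad x y * c) -> central c.
Proof.
move=> cxy.
have key x z : ad x c * ad c z = 0.
  have -> : ad x c * ad c z =
    (c * ad x (c * z) - ad x (c * z) * c) - (c * ad x c - ad x c * c) * z
    - c * (c * ad x z - ad x z * c) by rewrite /ad; ncr.
  by rewrite !cxy !subrr mul0r mulr0 !subr0.
move=> t; apply/ad_eq0; apply: A_semiprime => r.
have -> : ad c t * r * ad c t = - (ad t c * ad c (r * t)) + ad t c * ad c r * t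
  by rewrite /ad; ncr.
by rewrite !key mul0r oppr0 addr0.
Qed.

Lemma central_of_commute_ad (a s : A) :
  (forall u, ad a s * ad a u = ad a u * ad a s) -> ad a s * s = s * ad a s ->
  central (ad a s).
Proof.
set w := ad a s => w_ad w_s.
have w_ad0 u : w * ad a u - ad a u * w = 0 by rewrite w_ad subrr.
have key z t : w * z * ad w t = 0.
  have -> : w * z * ad w t =
     (w * ad a (s * z * t) - ad a (s * z * t) * w)
     - s * (w * ad a (z * t) - ad a (z * t) * w)
     - (w * ad a (s * z) - ad a (s * z) * w) * t
     + s * (w * ad a z - ad a z * w) * t
     - (w * s - s * w) * z * ad a t by rewrite /w /ad; ncr.
  by rewrite !w_ad0 w_s subrr; ncr.
move=> t; apply/ad_eq0; apply: A_semiprime => r.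
have -> : ad w t * r * ad w t = w * (t * r) * ad w t - t * (w * r * ad w t)
  by rewrite /ad; ncr.
by rewrite !key mulr0 subrr.
Qed.

Lemma ad_eq0_of_central (a s : A) :
  central (ad a s) -> central (ad a s * a) -> ad a s = 0.
Proof.
set c := ad a s => cc ca.
have c_ad r : c * ad a r = 0.
  have -> : c * ad a r = c * a * r - r * c * a by rewrite /ad mulrBr !mulrA (cc r).
  by rewrite -[r * c * a]mulrA ca subrr.
by apply: (@central_nilpotent_eq0 c 1 cc); rewrite expr2 {2}/c c_ad.
Qed.

Lemma iter_ad_mulr (a x : A) n : iter n (ad a) (x * a) = iter n (ad a) x * a.
Proof. by elim: n => //= n ->; rewrite /ad; ncr. Qed.

Lemma iter_ad_eq0 (a : A) k :
  (forall x y, ad (iter k.+2 (ad a) x) (ad a y) = 0) ->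
  forall x, iter k.+2 (ad a) x = 0.
Proof.
move=> comm_ad.
have cent x : central (iter k.+2 (ad a) x).
  apply: central_of_commute_ad => [u|]; apply/ad_eq0; first exact: comm_ad.
  exact: (comm_ad x (iter k (ad a) x)).
move=> x; apply: (@ad_eq0_of_central a (iter k.+1 (ad a) x) (cent x)).
by have := cent (x * a); rewrite iter_ad_mulr.
Qed.

Lemma central_of_ad_identity (a : A) :
  (forall x y, ad (iter 3 (ad a) x) y + ad (iter 2 (ad a) x) (ad a y) *+ 2 = 0) ->
  central a.
Proof.
move=> /= ad_id.
have ad4 x : ad a (ad a (ad a (ad a x))) = 0.
  have := ad_id x a; rewrite [ad a a]subrr [ad _ 0]/ad mulr0 mul0r subrr.
  by rewrite mul0rn addr0 /ad -opprB => /eqP; rewrite oppr_eq0 => /eqP.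
have ad3 x : ad a (ad a (ad a x)) = 0.
  apply: (@iter_ad_eq0 a 1) => {}x y /=; apply: double_eq0.
  by have := ad_id (ad a x) y; rewrite ad4 /ad mulr0 mul0r subrr add0r.
have ad2 x : ad a (ad a x) = 0.
  apply: (@iter_ad_eq0 a 0) => {}x y /=; apply: double_eq0.
  by have := ad_id x y; rewrite ad3 /ad mulr0 mul0r subrr add0r.
have ad_mul x y : ad a x * ad a y = 0.
  apply: double_eq0.
  have -> : (ad a x * ad a y) *+ 2 = ad a (ad a (x * y)) - ad a (ad a x) * y - x * ad a (ad a y)
    by rewrite /ad mulr2n; ncr.
  by rewrite !ad2 mul0r mulr0 !subr0.
move=> t; apply/ad_eq0; apply: A_semiprime => r.
have -> : ad a t * r * ad a t = ad a t * ad a (r * t) - ad a t * ad a r * t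
  by rewrite /ad; ncr.
by rewrite !ad_mul mul0r subrr.
Qed.

Definition der_defect (D : A -> A) (x y : A) : A := D (x * y) - D x * y - x * D y.

Section JordanDerivation.
Variable D : A -> A.
Hypothesis D_lin : linear D.
Hypothesis D_jordan : forall x y, D (jprod x y) = jprod (D x) y + jprod x (D y).

Local Notation dd := (der_defect D).

Lemma jder_triple x y z : D (x * y * z + z * y * x) =
  D x * y * z + x * D y * z + x * y * D z + D z * y * x + z * D y * x + z * y * D x.
Proof.
apply: double_inj; rewrite !mulr2n -(linD D_lin).
have -> : x * y * z + z * y * x + (x * y * z + z * y * x) =
  jprod x (jprod y z) + jprod (jprod x y) z - jprod y (jprod x z) by rewrite /jprod; ncr.
by rewrite (linB D_lin) (linD D_lin) !D_jordan /jprod; ncr.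
Qed.

Lemma jder_xyx x y : D (x * y * x) = D x * y * x + x * D y * x + x * y * D x.
Proof. by apply: double_inj; rewrite !mulr2n -(linD D_lin) jder_triple; ncr. Qed.

Lemma der_defectC x y : dd y x = - dd x y.
Proof.
apply/eqP; rewrite -addr_eq0; apply/eqP.
have := D_jordan x y; rewrite /jprod (linD D_lin) => Dxy.
transitivity (D (x * y) + D (y * x) - (D x * y + y * D x + (x * D y + D y * x))).
  by rewrite /der_defect; ncr.
by rewrite Dxy subrr.
Qed.

Lemma der_defectDl x u y : dd (x + u) y = dd x y + dd u y.
Proof. by rewrite /der_defect mulrDl !(linD D_lin); ncr. Qed.

Lemma der_defectDr x y v : dd x (y + v) = dd x y + dd x v.
Proof. by rewrite /der_defect mulrDr !(linD D_lin); ncr. Qed.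

Lemma der_defect_ad_sum x y r : dd x y * r * ad x y + ad x y * r * dd x y = 0.
Proof.
have := jder_triple (x * y) r (y * x).
have -> : x * y * r * (y * x) + y * x * r * (x * y) =
  x * (y * r * y) * x + y * (x * r * x) * y by ncr.
rewrite (linD D_lin) !jder_xyx.
have -> : D (x * y) = dd x y + D x * y + x * D y by rewrite /der_defect; ncr.
have -> : D (y * x) = - dd x y + D y * x + y * D x by rewrite -der_defectC /der_defect; ncr.
by move/eqP; rewrite -subr_eq0 => /eqP <-; rewrite /ad; ncr.
Qed.

Lemma der_defect_ad x y r : dd x y * r * ad x y = 0.
Proof. by apply: semiprime_sandwich => s; apply: der_defect_ad_sum. Qed.

Lemma ad_der_defect x y r : ad x y * r * dd x y = 0.
Proof. by apply: semiprime_sandwich => s; rewrite addrC; apply: der_defect_ad_sum. Qed.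

Lemma der_defect_ad_all x y u v r : dd x y * r * ad u v = 0.
Proof.
have adDl z : {morph ad^~ z : p q / p + q} by move=> ? ?; rewrite /ad; ncr.
have adDr z : {morph ad z : p q / p + q} by move=> ? ?; rewrite /ad; ncr.
have ddDl z : {morph dd^~ z : p q / p + q} by move=> ? ?; apply: der_defectDl.
have ddDr z : {morph dd z : p q / p + q} by move=> ? ?; apply: der_defectDr.
have dd_ad_l p q z r' : dd p z * r' * ad q z = 0.
  exact: (semiprime_cross (ddDl z) (adDl z) (der_defect_ad^~ z) (ad_der_defect^~ z)).
have ad_dd_l p q z r' : ad q z * r' * dd p z = 0.
  exact: (semiprime_cross (adDl z) (ddDl z) (ad_der_defect^~ z) (der_defect_ad^~ z)).
exact: (semiprime_cross (ddDr x) (adDr u) (dd_ad_l x u) (ad_dd_l x u)).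
Qed.

Lemma der_defect_central x y : central (dd x y).
Proof.
move=> t; apply/ad_eq0; apply: A_semiprime => r.
have -> : ad (dd x y) t * r * ad (dd x y) t =
  dd x y * (t * r) * ad (dd x y) t - t * (dd x y * r * ad (dd x y) t) by rewrite /ad; ncr.
by rewrite !der_defect_ad_all mulr0 subrr.
Qed.

Lemma der_defect_sqr_D_ad x y : dd x y * dd x y * D (ad x y) = 0.
Proof.
set c := dd x y; set z := ad x y.
have cc := der_defect_central x y.
have cz : c * z = 0 by rewrite -[c]mulr1 der_defect_ad_all.
have zc : z * c = 0 by rewrite -cc.
have Dcz := D_jordan c z; rewrite /jprod cz zc addr0 (lin0 D_lin) in Dcz.
apply: double_eq0.
have -> : (c * c * D z) *+ 2 = c * (D c * z + z * D c + (c * D z + D z * c))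
  - (c * D c - D c * c) * z - D c * (c * z) - c * z * D c - c * (D z * c - c * D z)
  by rewrite mulr2n; ncr.
by rewrite -Dcz (cc (D c)) (cc (D z)) cz !subrr !(mulr0, mul0r) !subr0.
Qed.

Lemma der_defect_eq0 x y : dd x y = 0.
Proof.
set c := dd x y.
have c_ad u v : c * ad u v = 0 by rewrite -[c]mulr1 der_defect_ad_all.
have c2 : c *+ 2 = D (ad x y) - ad (D x) y - ad x (D y).
  by rewrite mulr2n /c -{1}[dd x y]opprK -der_defectC /der_defect /ad (linB D_lin); ncr.
apply: (@central_nilpotent_eq0 c 2 (der_defect_central x y)); apply: double_eq0.
have -> : (c ^+ 3) *+ 2 = c * c * (c *+ 2) by rewrite !exprS expr0 mulr1 mulrnAr mulrA.
have c2D := der_defect_sqr_D_ad x y; rewrite -/c in c2D.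
have -> : c * c * (c *+ 2) =
  c * c * D (ad x y) - c * (c * ad (D x) y) - c * (c * ad x (D y)) by rewrite c2; ncr.
by rewrite c2D !c_ad mulr0 !subr0.
Qed.

Lemma jordan_der_is_der : Der D.
Proof.
split=> // x y; apply/eqP; rewrite -subr_eq0 opprD addrA.
by have := der_defect_eq0 x y; rewrite /der_defect => ->.
Qed.

End JordanDerivation.

Definition gj_defect (f : A -> A) (a v w : A) : A :=
  (jprod (f v) w + jprod v (f w) - f (v * w) - f (w * v)) *+ 2 - jprod (jprod v w) a.

Lemma ad_identity_of_gj_defect (f : A -> A) (a : A) :
  (forall v w, gj_defect f a v w = 0) ->
  forall x y, ad (iter 3 (ad a) x) y + ad (iter 2 (ad a) x) (ad a y) *+ 2 = 0.
Proof.
move=> M0 x y /=; apply: double_eq0.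
pose M := gj_defect f a.
(* Every value of f cancels in this combination of instances of M; the
   coefficients come from solving a linear system over the monomials in a, x, y. *)
have -> : (ad (ad a (ad a (ad a x))) y + ad (ad a (ad a x)) (ad a y) *+ 2) *+ 2 =
  M a (a * x * y) - M a (a * y * x) - (M a (x * a * y)) *+ 2 - M a (x * y * a)
  - (M a (y * a * x)) *+ 2 + M a (y * x * a) - M (a * a * x) y + M (a * a * y) x
  + (M (a * x * a) y) *+ 2 + (M (a * y * a) x) *+ 2 + M x (y * a * a) - M (x * a * a) y
  + M a (a * x) * y + M a (a * y) * x + M a (x * a) * y + M a (x * y) * a
  + M a (y * a) * x + M a (y * x) * a - (M (a * a) x * y) *+ 2 - (M (a * y) x * a) *+ 2
  - (M x (y * a) * a) *+ 2 + a * M a (x * y) + a * M a (y * x) - (a * M (a * y) x) *+ 2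
  - (a * M x (y * a)) *+ 2 + x * M a (a * y) + x * M a (y * a) + y * M a (a * x)
  + y * M a (x * a) - (y * M (a * a) x) *+ 2 - M a a * (x * y) + M a x * (a * y)
  + M a y * (a * x) - (M a y * (x * a)) *+ 2 + M x y * (a * a) + a * M a x * y
  - a * M a y * x + (a * M x y * a) *+ 2 + a * a * M x y - (a * x * M a y) *+ 2
  - x * M a a * y - x * M a y * a + x * a * M a y - y * M a a * x + y * M a x * a
  + y * a * M a x - y * x * M a a
  by rewrite /M /gj_defect /jprod /ad !mulr2n ?mulrA; ncr.
by rewrite /M !M0 !(mul0rn, mulr0, mul0r, addr0, subr0).
Qed.

Section GJDer.
Variables f g h : A -> A.
Hypotheses (f_lin : linear f) (h_lin : linear h).
Hypothesis fgh : forall x y, jprod (f x) y + jprod x (g y) = h (jprod x y).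

Lemma gjder_h x : h x *+ 2 = f x *+ 2 + jprod x (g 1).
Proof. by have := fgh x 1; rewrite !jprodr1 !mulr2n (linD h_lin) => <-. Qed.

Lemma gjder_g y : g y *+ 2 = f y *+ 2 + jprod y (g 1 - f 1).
Proof.
have h2 : h (y *+ 2) = h y *+ 2 by rewrite !mulr2n (linD h_lin).
have := fgh 1 y; rewrite !jprod1r h2 gjder_h => fgh1.
by apply: (addrI (jprod (f 1) y)); rewrite fgh1 /jprod !mulr2n; ncr.
Qed.

Lemma gjder_shift_central : central (g 1 - f 1).
Proof.
set c := g 1 - f 1.
apply: central_of_commute_commutators => x y; apply/eqP; rewrite eq_sym -subr_eq0.
have -> : ad x y * c - c * ad x y =
  (jprod (f x) y + jprod x (g y)) *+ 2 - (jprod (f y) x + jprod y (g x)) *+ 2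
  - jprod x (g y *+ 2 - (f y *+ 2 + jprod y c))
  + jprod y (g x *+ 2 - (f x *+ 2 + jprod x c)) by rewrite /jprod /ad !mulr2n; ncr.
have -> : jprod (f y) x + jprod y (g x) = jprod (f x) y + jprod x (g y).
  by rewrite !fgh /jprod addrC.
by rewrite !gjder_g !subrr /jprod !(mulr0, mul0r, addr0, subr0).
Qed.

Lemma gjder_defect0 v w : gj_defect f (f 1) v w = 0.
Proof.
set c := g 1 - f 1.
have c_ad : ad c v = 0 by apply/ad_eq0/gjder_shift_central.
have -> : gj_defect f (f 1) v w =
  (jprod (f v) w + jprod v (g w)) *+ 2 - h (jprod v w) *+ 2
  - jprod v (g w *+ 2 - (f w *+ 2 + jprod w c))
  + (h (jprod v w) *+ 2 - (f (jprod v w) *+ 2 + jprod (jprod v w) (g 1)))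
  - (w * ad c v - ad c v * w).
  by rewrite /c /gj_defect /jprod /ad (linD f_lin) !mulr2n; ncr.
by rewrite fgh gjder_g gjder_h c_ad !subrr /jprod !(mulr0, mul0r, addr0, subr0).
Qed.

End GJDer.

Lemma jordan_sub_lmul (f : A -> A) :
  linear f -> (forall v w, gj_defect f (f 1) v w = 0) -> central (f 1) ->
  forall x y, f (jprod x y) - f 1 * jprod x y =
    jprod (f x - f 1 * x) y + jprod x (f y - f 1 * y).
Proof.
move=> f_lin M0 f1c x y; apply: double_inj.
apply/eqP; rewrite -subr_eq0; apply/eqP.
have f1x : ad (f 1) x = 0 by apply/ad_eq0/f1c.
have f1y : ad (f 1) y = 0 by apply/ad_eq0/f1c.
have -> : (f (jprod x y) - f 1 * jprod x y) *+ 2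
    - (jprod (f x - f 1 * x) y + jprod x (f y - f 1 * y)) *+ 2 =
  - gj_defect f (f 1) x y + x * ad (f 1) y + y * ad (f 1) x
  - ad (f 1) x * y - ad (f 1) y * x.
  by rewrite /gj_defect /jprod /ad (linD f_lin) !mulr2n; ncr.
by rewrite M0 f1x f1y !(mulr0, mul0r, oppr0, addr0, subr0).
Qed.

End Semiprime.

Lemma linear_sub_lmul (f : A -> A) (a : A) : linear f -> linear (fun x => f x - a * x).
Proof.
by move=> f_lin k u v; rewrite (linD f_lin) (linZ f_lin) mulrDr -scalerAr scalerBr; ncr.
Qed.

Lemma lmul_cent (a : A) : central a -> Cent (fun x => a * x).
Proof.
move=> ac; split=> [k u v|x y]; first by rewrite mulrDr -scalerAr.
by rewrite mulrA (ac x) -mulrA.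
Qed.

Lemma cent_add_der_gjder (c d : A -> A) : Cent c -> Der d -> GJDer (fun x => c x + d x).
Proof.
move=> [c_lin c_mul] [d_lin d_mul].
have cd_lin : linear (fun x => c x + d x).
  by move=> k u v; rewrite (linD c_lin) (linD d_lin) (linZ c_lin) (linZ d_lin) scalerDr; ncr.
split=> //; exists d, (fun x => c x + d x); do 2!split=> //.
move=> x y; rewrite /jprod (linD c_lin) (linD d_lin) !d_mul.
by case: (c_mul x y) => -> _; case: (c_mul y x) => _ ->; ncr.
Qed.

End GeneralizedJordanDerivations.

Theorem theorem2p3 (F : fieldType) (A : algType F) :
  2 \notin [pchar F] -> semiprime A ->
  forall f : A -> A,
    GJDer f <-> exists c d : A -> A, Cent c /\ Der d /\ f = (fun x => c x + d x).
Proof.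
move=> char2 A_sp f; split=> [[f_lin [g [h [_ [h_lin fgh]]]]] | [c [d [c_cent [d_der ->]]]]].
- have M0 := gjder_defect0 A_sp f g h f_lin h_lin fgh.
  have f1c : central (f 1).
    by apply: central_of_ad_identity => //; apply: ad_identity_of_gj_defect.
  exists (fun x => f 1 * x), (fun x => f x - f 1 * x); split; last split.
  + exact: lmul_cent.
  + by apply: jordan_der_is_der => //; [apply: linear_sub_lmul | apply: jordan_sub_lmul].
  + by apply: functional_extensionality => x; rewrite addrC subrK.
- exact: cent_add_der_gjder.
Qed.
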